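(* For $n\ge 1$, let $\gamma(n)$ denote the number of partitions of $n$ having no part equal to $1$ and in which the largest part appears at least twice. Then for all $n\ge 3$, $$\gamma(n)\ \ge\ \gamma(n-2).$$
   Context: Partitions with no part equal to $1$ whose largest part occurs at least twice are called ground state non-unitary partitions; $\gamma(n)$ counts those of size $n$ (for $n\ge1$). *)

From mathcomp Require Import all_boot.
Set Implicit Arguments. Unset Strict Implicit. Unset Printing Implicit Defensive.

Definition is_partition (n : nat) (s : seq nat) : bool :=
  [&& sorted geq s, all (fun x => 0 < x) s & sumn s == n].

Definition gsnu (s : seq nat) : bool :=
  (1 \notin s) && (1 < count_mem (head 0 s) s).

(* A partition of n has at most n parts, each at most n; so partitions of n
   are enumerated by k-tuples over 'I_n.+1 for k <= n. *)
Definition gamma (n : nat) : nat :=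
  \sum_(k < n.+1)
    #|[set t : k.-tuple 'I_n.+1 |
        let s := map (@nat_of_ord n.+1) t in is_partition n s && gsnu s]|.

(* Appending a part 2 to a ground state non-unitary partition of m yields one
   of m + 2: the parts are all at least 2, so the sequence stays non-increasing,
   no part 1 appears, and the largest part and its multiplicity are unchanged.
   This map is injective and adds exactly one part, so it embeds the partitions
   of m with k parts into those of m + 2 with k + 1 parts. *)

From mathcomp Require Import all_boot.

Set Implicit Arguments.
Unset Strict Implicit.
Unset Printing Implicit Defensive.

Lemma is_partition_rcons m s a :
  0 < a -> all (leq a) s -> is_partition m s -> is_partition (m + a) (rcons s a).
Proof.
move=> a_gt0 a_le_s /and3P[s_sorted s_pos /eqP <-].
apply/and3P; split; last by rewrite sumn_rcons.
- case: s a_le_s s_sorted {s_pos} => [|x s] // a_le_s s_path.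
  rewrite /= rcons_path (s_path : path geq x s) /=.
  exact: allP a_le_s _ (mem_last x s).
- by rewrite all_rcons a_gt0.
Qed.

Lemma gsnu_rcons s a : a != 1 -> gsnu s -> gsnu (rcons s a).
Proof.
case: s => [|x s] a_neq1 /andP[one_notin_s cnt_head] //.
apply/andP; split; first by rewrite mem_rcons in_cons eq_sym (negbTE a_neq1).
by rewrite -cats1 count_cat (leq_trans cnt_head) ?leq_addr.
Qed.

Lemma gsnu_partition_ge2 m s : is_partition m s -> gsnu s -> all (leq 2) s.
Proof.
case/and3P=> _ /allP s_pos _ /andP[one_notin_s _]; apply/allP=> x x_in_s.
rewrite ltn_neqAle s_pos // andbT; apply: contraNneq one_notin_s => ->.
exact: x_in_s.
Qed.

Lemma gsnu_partition_rcons2 m s :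
  is_partition m s && gsnu s -> is_partition m.+2 (rcons s 2) && gsnu (rcons s 2).
Proof.
case/andP=> s_part s_gsnu; rewrite gsnu_rcons // andbT -[m.+2]addn2.
exact: is_partition_rcons _ (gsnu_partition_ge2 s_part s_gsnu) s_part.
Qed.

Definition gsnu_tuples n k : {set k.-tuple 'I_n.+1} :=
  [set t : k.-tuple 'I_n.+1 |
     let s := map (@nat_of_ord n.+1) t in is_partition n s && gsnu s].

Lemma gammaE n : gamma n = \sum_(k < n.+1) #|gsnu_tuples n k|.
Proof. by []. Qed.

Section AppendTwo.
Variables m k : nat.

Definition widen2 (i : 'I_m.+1) : 'I_m.+3 := widen_ord (leq_addl 2 m.+1) i.

Definition rcons2_tuple (t : k.-tuple 'I_m.+1) : k.+1.-tuple 'I_m.+3 :=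
  [tuple of rcons (map widen2 t) (inord 2)].

Lemma widen2_inj : injective widen2.
Proof. by move=> i j /(congr1 val) eq_ij; apply: val_inj. Qed.

Lemma rcons2_tuple_inj : injective rcons2_tuple.
Proof.
move=> t1 t2 /(congr1 val) /rcons_inj [] /(inj_map widen2_inj) eq_t.
exact: val_inj.
Qed.

Lemma map_rcons2_tuple (t : k.-tuple 'I_m.+1) :
  map (@nat_of_ord m.+3) (rcons2_tuple t) = rcons (map (@nat_of_ord m.+1) t) 2.
Proof. by rewrite map_rcons -map_comp inordK. Qed.

Lemma card_gsnu_tuples_rcons2 : #|gsnu_tuples m k| <= #|gsnu_tuples m.+2 k.+1|.
Proof.
rewrite -(card_imset _ rcons2_tuple_inj); apply/subset_leq_card/subsetP.
move=> u /imsetP[t]; rewrite !inE => t_gsnu ->.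
by rewrite map_rcons2_tuple; apply: gsnu_partition_rcons2.
Qed.

End AppendTwo.

Theorem proposition1 (n : nat) : 3 <= n -> gamma (n - 2) <= gamma n.
Proof.
case: n => [|[|[|m]]] // _; rewrite subSS subSS subn0 !gammaE.
rewrite [X in _ <= X]big_ord_recl (leq_trans _ (leq_addl _ _)) //.
rewrite [X in _ <= X]big_ord_recr (leq_trans _ (leq_addr _ _)) //=.
by apply: leq_sum => k _; apply: card_gsnu_tuples_rcons2.
Qed.
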